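(* Let $\mathbf A$ be a finite subdirectly irreducible cBCK-algebra. Then, up to isomorphism, $$\mathcal S(\mathbf A)=\mathcal S_d(\mathbf A)\cup \mathcal S_\delta(\mathcal S_d(\mathbf A)).$$ Moreover, if every algebra in $\mathcal S_\delta(\mathcal S_d(\mathbf A))$ is a chain, then $\mathcal S(\mathbf A)=\mathcal S_d(\mathbf A)$.
   Context: A BCK-algebra is an algebra $(A,\ominus,0)$ of type $(2,0)$ satisfying $((x\ominus y)\ominus(x\ominus z))\ominus(z\ominus y)=0$, $x\ominus 0=x$, $0\ominus x=0$, and ($x\ominus y=0$ and $y\ominus x=0$ imply $x=y$); it is ordered by $x\le y$ iff $x\ominus y=0$. A cBCK-algebra is a BCK-algebra satisfying $x\ominus(x\ominus y)=y\ominus(y\ominus x)$; its order is a meet-semilattice with $x\wedge y=x\ominus(x\ominus y)$. Finite subdirectly irreducible cBCK-algebras are, as posets, rooted trees with root $0$. For an element $a$, $\mathrm{h}(a)=|[0,a]|-1$ is its height, and the height of an algebra is the maximum height of its elements; $\mathrm{m}(\cdot)$ denotes the set of maximal elements. $\mathcal S(\mathbf A)$ is the set of subalgebras of $\mathbf A$; $\mathcal S_d(\mathbf A)$ is the set of subalgebras of $\mathbf A$ whose universe is a downset of $\mathbf A$. For a finite cBCK-algebra $\mathbf C$ whose order is a rooted tree, of height $n$, and for $k$ a divisor of $n$ with $k\ne 1,n$, put $C_k=\{x\in C\mid k\text{ divides }\mathrm{h}(x)\}$; $\mathcal S_\delta(\mathbf C)$ denotes the set of subalgebras of $\mathbf C$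 whose universe is of the form $C_k\cup\mathrm{m}(\mathbf C)$ for such a $k$. For a set $\mathcal X$ of such algebras, $\mathcal S_\delta(\mathcal X)=\bigcup_{\mathbf C\in\mathcal X}\mathcal S_\delta(\mathbf C)$. *)

From mathcomp Require Import all_boot.
Set Implicit Arguments. Unset Strict Implicit. Unset Printing Implicit Defensive.

Record cBCK (T : finType) := CBCK {
  bop : T -> T -> T;
  bzero : T;
  bck_ax1 : forall x y z, bop (bop (bop x y) (bop x z)) (bop z y) = bzero;
  bck_ax2 : forall x, bop x bzero = x;
  bck_ax3 : forall x, bop bzero x = bzero;
  bck_ax4 : forall x y, bop x y = bzero -> bop y x = bzero -> x = y;
  cbck_comm : forall x y, bop x (bop x y) = bop y (bop y x)
}.

Section Defs.
Variables (T : finType) (A : cBCK T).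
Local Notation "x ⊖ y" := (bop A x y) (at level 50, left associativity).
Local Notation O := (bzero A).

Definition ble (x y : T) : bool := (x ⊖ y) == O.

(* congruences (0 is a constant, so only compatibility with ⊖ is needed) *)
Definition congruence (th : T -> T -> Prop) : Prop :=
  (forall x, th x x) /\ (forall x y, th x y -> th y x) /\
  (forall x y z, th x y -> th y z -> th x z) /\
  (forall x y x' y', th x x' -> th y y' -> th (x ⊖ y) (x' ⊖ y')).

(* subdirectly irreducible: the non-identity congruences have a
   non-identity intersection (this includes nontriviality) *)
Definition subdirectly_irreducible : Prop :=
  exists a b : T, a <> b /\
    forall th, congruence th -> (exists x y, x <> y /\ th x y) -> th a b.

Definition is_subalg (S : {set T}) : Prop :=
  O \in S /\ forall x y, x \in S -> y \in S -> (x ⊖ y) \in S.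

Definition is_downset (S : {set T}) : Prop :=
  forall x y, y \in S -> ble x y -> x \in S.

Definition in_Sd (S : {set T}) : Prop := is_subalg S /\ is_downset S.

Definition hgt (S : {set T}) (a : T) : nat :=
  (#|[set x in S | ble O x && ble x a]|).-1.

Definition height (S : {set T}) : nat := \max_(x in S) hgt S x.

Definition maxel (S : {set T}) : {set T} :=
  [set x in S | [forall y in S, ble x y ==> (y == x)]].

Definition Ck (C : {set T}) (k : nat) : {set T} :=
  [set x in C | k %| hgt C x].

Definition in_Sdelta (C D : {set T}) : Prop :=
  is_subalg D /\
  exists k : nat, k %| height C /\ k <> 1 /\ k <> height C /\
    D = Ck C k :|: maxel C.

Definition in_Sdelta_Sd (D : {set T}) : Prop :=
  exists C, in_Sd C /\ in_Sdelta C D.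

Definition subalg_iso (B D : {set T}) : Prop :=
  exists f : T -> T, {in B &, injective f} /\ f @: B = D /\
    forall x y, x \in B -> y \in B -> f (x ⊖ y) = f x ⊖ f y.

Definition is_chain (D : {set T}) : Prop :=
  forall x y, x \in D -> y \in D -> ble x y \/ ble y x.

End Defs.

From mathcomp Require Import all_boot zify.
Set Implicit Arguments. Unset Strict Implicit. Unset Printing Implicit Defensive.

(* In a subdirectly irreducible cBCK-algebra two nonzero elements have a
   nonzero meet (otherwise a polar and its own polar would be ideals with
   trivial intersection), so a finite one has an atom [c] lying below every
   nonzero element.  Then [x |-> x ⊖ c] is the predecessor map, every
   principal downset is a chain, and heights subtract: ht (x ⊖ y) =
   ht x - ht y for y <= x.
   Let [d] be the least height of a nonzero element [b0] of a subalgebra [B].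
   For nonzero [b] in [B], [b ⊖ (b ∧ b0)] lies in [B] and is exactly [d]
   lower than [b]; descending this way shows that [B] consists precisely of
   the elements below [B] whose height is a multiple of [d].  So [B] is a
   downset when [d = 1]; otherwise, with [C] the downset generated by [B],
   either [B = C_d ∪ m(C)] or [d] is the height of [C] and [B] is a chain.
   Finally a chain subalgebra is isomorphic, by dividing heights by [d], to
   a principal downset. *)

Lemma leq_sub_dvdn d m n : d %| m -> d %| n -> m < n -> m <= n - d.
Proof.
move=> dm dn mn; have : d <= n - m by apply: dvdn_leq; rewrite ?subn_gt0 ?dvdn_sub.
lia.
Qed.

Section CBCKTheory.
Variables (T : finType) (A : cBCK T).
Local Notation "x ⊖ y" := (bop A x y) (at level 50, left associativity).
Local Notation O := (bzero A).
Local Notation "x ≼ y" := (x ⊖ y = O) (at level 70).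
Local Notation meet x y := (x ⊖ (x ⊖ y)).

Lemma bsubxx x : x ⊖ x = O.
Proof. by have := bck_ax1 A x O O; rewrite !bck_ax2. Qed.

Lemma ble_subr x y : x ⊖ y ≼ x.
Proof. by have := bck_ax1 A x y O; rewrite !bck_ax2 bck_ax3 bck_ax2. Qed.

Lemma ble_trans x y z : x ≼ y -> y ≼ z -> x ≼ z.
Proof. by move=> xy yz; have := bck_ax1 A x z y; rewrite xy yz !bck_ax2. Qed.

Lemma blex0 x : x ≼ O -> x = O.
Proof. by rewrite bck_ax2. Qed.

Lemma ble_sub2l x y z : y ≼ z -> x ⊖ z ≼ x ⊖ y.
Proof. by move=> yz; have := bck_ax1 A x z y; rewrite yz bck_ax2. Qed.

Lemma ble_sub2r x y z : x ≼ y -> x ⊖ z ≼ y ⊖ z.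
Proof. by move=> xy; have := bck_ax1 A x z y; rewrite xy bck_ax2. Qed.

Lemma bmeet_ler x y : meet x y ≼ y.
Proof. by have := bck_ax1 A x O y; rewrite !bck_ax2. Qed.

Lemma bmeet_le_eq x y : x ≼ y -> meet y x = x.
Proof. by move=> xy; rewrite -cbck_comm xy bck_ax2. Qed.

Lemma ble_bmeet w x y : w ≼ x -> w ≼ y -> w ≼ meet x y.
Proof. by move=> wx wy; rewrite -(bmeet_le_eq wx); apply/ble_sub2l/ble_sub2l. Qed.

Lemma bsubAC x y z : x ⊖ y ⊖ z = x ⊖ z ⊖ y.
Proof.
have le_AC u v w : u ⊖ v ⊖ w ≼ u ⊖ w ⊖ v.
  exact: ble_trans (ble_sub2l _ (bmeet_ler u w)) (bck_ax1 A _ _ _).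
by apply: bck_ax4; apply: le_AC.
Qed.

Lemma ble_sub_sub x y z : x ⊖ z ⊖ (y ⊖ z) ≼ x ⊖ y.
Proof. by rewrite bsubAC; apply: bck_ax1. Qed.

Definition down x := [set z | ble A z x].

Lemma in_down z x : (z \in down x) = (z ⊖ x == O).
Proof. by rewrite inE. Qed.

Lemma down_in_Sd x : in_Sd A (down x).
Proof.
split; first split.
- by rewrite in_down bck_ax3.
- move=> y z; rewrite !in_down => /eqP yx _.
  by apply/eqP/(ble_trans (ble_subr y z)).
- by move=> y z; rewrite !in_down => /eqP zx /eqP yz; apply/eqP/(ble_trans yz).
Qed.

Lemma subalg_iso_refl B : subalg_iso A B B.
Proof. by exists id; split=> //; rewrite imset_id. Qed.

Definition downclosure (B : {set T}) := \bigcup_(b in B) down b.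

Lemma mem_downclosure (B : {set T}) b z : b \in B -> z ≼ b -> z \in downclosure B.
Proof. by move=> bB zb; apply/bigcupP; exists b; rewrite ?in_down ?zb. Qed.

Lemma downclosure_in_Sd (B : {set T}) : O \in B -> in_Sd A (downclosure B).
Proof.
move=> B0; split; first split.
- exact: mem_downclosure B0 (bsubxx O).
- move=> x y /bigcupP [b bB]; rewrite in_down => /eqP xb _.
  exact: mem_downclosure bB (ble_trans (ble_subr x y) xb).
- move=> x y /bigcupP [b bB]; rewrite in_down => /eqP yb /eqP xy.
  exact: mem_downclosure bB (ble_trans xy yb).
Qed.

Lemma maxel_downclosure (B : {set T}) : maxel A (downclosure B) \subset B.
Proof.
apply/subsetP => x; rewrite inE => /andP [/bigcupP [b bB xb] /forall_inP xmax].
rewrite inE in xb; have bC := mem_downclosure bB (bsubxx b).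
by have /eqP <- := implyP (xmax b bC) xb.
Qed.

Definition ht x := #|down x|.-1.

Lemma ht_mono x y : x ≼ y -> ht x <= ht y.
Proof.
move=> xy; suff: #|down x| <= #|down y| by rewrite /ht; lia.
apply/subset_leq_card/subsetP => z; rewrite !in_down => /eqP zx.
by apply/eqP/(ble_trans zx).
Qed.

Lemma hgt_downset C x : is_downset A C -> x \in C -> hgt A C x = ht x.
Proof.
move=> Cdown xC; congr _.-1; apply: eq_card => z.
rewrite !inE /ble bck_ax3 eqxx /=.
by apply/andP/idP => [[] // | zx]; split=> //; apply: Cdown zx.
Qed.

Lemma ht_le_height C x : is_downset A C -> x \in C -> ht x <= height A C.
Proof. by move=> Cdown xC; rewrite -(hgt_downset Cdown xC); apply: leq_bigmax_cond. Qed.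

Lemma height_downclosure (B : {set T}) : O \in B ->
  exists2 t, t \in B & height A (downclosure B) = ht t.
Proof.
move=> B0; have [[C0 _] Cdown] := downclosure_in_Sd B0.
have [|x xC hx] := @eq_bigmax_cond _ (mem (downclosure B)) (hgt A (downclosure B)).
  by apply/card_gt0P; exists O.
have /bigcupP [t tB] := xC; rewrite in_down => /eqP xt; exists t => //.
apply/eqP; rewrite eqn_leq ht_le_height ?(mem_downclosure tB (bsubxx t)) //.
by rewrite /height hx (hgt_downset Cdown xC) andbT ht_mono.
Qed.

Definition bck_ideal (I : T -> Prop) := I O /\ forall x y, I (x ⊖ y) -> I y -> I x.

Definition ideal_cong (I : T -> Prop) x y := I (x ⊖ y) /\ I (y ⊖ x).

Lemma bck_ideal_le I x y : bck_ideal I -> x ≼ y -> I y -> I x.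
Proof. by case=> I0 Isub xy Iy; apply: (Isub x y) => //; rewrite xy. Qed.

Lemma ideal_congruence I : bck_ideal I -> congruence A (ideal_cong I).
Proof.
move=> Iid; have [I0 Isub] := Iid.
have cong_trans x y z : ideal_cong I x y -> ideal_cong I y z -> ideal_cong I x z.
  move=> [Ixy Iyx] [Iyz Izy]; split.
  - by apply: Isub Ixy; apply: bck_ideal_le Iid _ Iyz; apply: bck_ax1.
  - by apply: Isub Izy; apply: bck_ideal_le Iid _ Iyx; apply: bck_ax1.
split; first by move=> x; split; rewrite bsubxx.
split; first by move=> x y [].
split; first exact: cong_trans.
move=> x y x' y' [Ixx' Ix'x] [Iyy' Iy'y]; apply: (cong_trans _ (x' ⊖ y)); split.
- exact: bck_ideal_le Iid (ble_sub_sub _ _ _) Ixx'.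
- exact: bck_ideal_le Iid (ble_sub_sub _ _ _) Ix'x.
- exact: bck_ideal_le Iid (bck_ax1 _ _ _ _) Iy'y.
- exact: bck_ideal_le Iid (bck_ax1 _ _ _ _) Iyy'.
Qed.

Definition polar (S : T -> Prop) t := forall s, S s -> meet t s = O.

Lemma polar_ideal S : bck_ideal (polar S).
Proof.
split=> [s _|u v Puv Pv s Ss]; first by rewrite bck_ax3.
set w := meet u s.
have ws : w ≼ s by apply: bmeet_ler.
have : w ⊖ v ≼ meet (u ⊖ v) s.
  by apply: ble_bmeet; [apply/ble_sub2r/ble_subr | apply: ble_trans (ble_subr _ _) ws].
rewrite Puv // => /blex0 wv.
by have := ble_bmeet wv ws; rewrite Pv // => /blex0.
Qed.

Lemma si_bmeet_neq0 x y : subdirectly_irreducible A ->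
  x <> O -> y <> O -> meet x y <> O.
Proof.
move=> [a [b [ab ab_least]]] x0 y0 xy0.
pose I := polar (eq^~ x); pose J := polar I.
have IJ t : I t -> J t -> t = O by move=> It /(_ t It); rewrite bsubxx bck_ax2.
have identifies K z : bck_ideal K -> K z -> z <> O -> ideal_cong K a b.
  move=> Kid Kz z0; apply: ab_least; first exact: ideal_congruence.
  by exists z, O; split=> //; rewrite /ideal_cong bck_ax3 bck_ax2; split=> //; case: Kid.
have Iy : I y by move=> s ->; rewrite cbck_comm.
have Jx : J x by move=> s Is; rewrite cbck_comm; apply: Is.
have [Iab Iba] := identifies _ _ (polar_ideal _) Iy y0.
have [Jab Jba] := identifies _ _ (polar_ideal _) Jx x0.
by apply: ab; apply: bck_ax4; apply: IJ.
Qed.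

Lemma si_exists_atom : subdirectly_irreducible A ->
  exists c, c <> O /\ forall u, u <> O -> c ≼ u.
Proof.
move=> SI; have [x x0] : exists x, x <> O.
  have [a [b [ab _]]] := SI.
  by case: (a =P O) => [a0|]; [exists b => b0; apply: ab; rewrite a0 b0 | exists a].
pose P := [pred z | z != O].
have Px : P x by apply/eqP.
case: (arg_minnP (fun z => #|down z|) Px) => c /eqP c0 c_min.
exists c; split=> // u u0.
have m0 := si_bmeet_neq0 SI c0 u0.
have sub : down (meet c u) \subset down c.
  apply/subsetP => z; rewrite !in_down => /eqP zm.
  by apply/eqP/(ble_trans zm)/ble_subr.
have /eqP eq_down : down (meet c u) == down c.
  by rewrite -(subset_leqif_cards sub) eqn_leq subset_leq_card // c_min //; apply/eqP.
have : c \in down (meet c u) by rewrite eq_down in_down bsubxx.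
by rewrite in_down => /eqP /ble_trans; apply; apply: bmeet_ler.
Qed.

Section Atom.
Variable c : T.
Hypothesis c_neq0 : c <> O.
Hypothesis c_atom : forall u, u <> O -> c ≼ u.

Lemma bmeet_neq0 x y : x <> O -> y <> O -> meet x y <> O.
Proof.
move=> /c_atom cx /c_atom cy m0.
by apply: c_neq0; apply: blex0; have := ble_bmeet cx cy; rewrite m0.
Qed.

Lemma ble_bsub_atom x y : y ≼ x -> y <> x -> y ≼ x ⊖ c.
Proof.
move=> yx yNx; have xy0 : x ⊖ y <> O by move/(bck_ax4 yx).
by rewrite -(bmeet_le_eq yx); apply/ble_sub2l/c_atom.
Qed.

Lemma ht_gt0 x : x <> O -> 0 < ht x.
Proof.
move=> x0; have sub : [set x; O] \subset down x.
  apply/subsetP => z; rewrite in_down !inE => /orP [] /eqP ->.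
  - exact/eqP/bsubxx.
  - exact/eqP/bck_ax3.
by have := subset_leq_card sub; rewrite cards2 /ht; case: eqP => // _; lia.
Qed.

Lemma ht0 : ht O = 0.
Proof.
rewrite /ht (_ : down O = [set O]) ?cards1 //.
apply/setP => z; rewrite in_set1 in_down.
by apply/eqP/eqP => [/blex0 | ->]; rewrite ?bsubxx.
Qed.

Lemma ht_bsub_atom x : ht (x ⊖ c) = (ht x).-1.
Proof.
case: (x =P O) => [->|x0]; first by rewrite bck_ax3 ht0.
have xNdown : x \notin down (x ⊖ c).
  rewrite in_down; apply/eqP => /(bck_ax4 (ble_subr x c)) xc.
  by apply: c_neq0; rewrite -(bmeet_le_eq (c_atom x0)) xc bsubxx.
have down_x : down x = x |: down (x ⊖ c).
  apply/setP => z; rewrite in_setU1 !in_down.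
  case: (z =P x) => [->|zNx]; first by rewrite bsubxx eqxx.
  apply/eqP/eqP => [zx | /ble_trans]; first exact: ble_bsub_atom.
  by apply; apply: ble_subr.
by rewrite /ht down_x cardsU1 xNdown.
Qed.

Lemma ht_ind (P : T -> Prop) :
  P O -> (forall x, x <> O -> P (x ⊖ c) -> P x) -> forall x, P x.
Proof.
move=> P0 Pstep x; have [n] := ubnP (ht x); elim: n x => // n IHn x hx.
case: (x =P O) => [-> | x0] //; apply: (Pstep _ x0); apply: IHn.
by rewrite ht_bsub_atom; have := ht_gt0 x0; lia.
Qed.

Lemma ht_lt x y : y ≼ x -> y <> x -> ht y < ht x.
Proof.
move=> yx yNx; have x0 : x <> O by move=> x0; apply: yNx; rewrite x0 in yx *; apply: blex0.
have := ht_mono (ble_bsub_atom yx yNx); rewrite ht_bsub_atom.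
by have := ht_gt0 x0; lia.
Qed.

Lemma ble_total_below x y z : y ≼ x -> z ≼ x -> y ≼ z \/ z ≼ y.
Proof.
elim/ht_ind: x y z => [|x x0 IH] y z yx zx.
  by rewrite (blex0 yx) (blex0 zx) bsubxx; left.
case: (y =P x) => [-> | yNx]; first by right.
case: (z =P x) => [-> | zNx]; first by left.
by apply: IH; apply: ble_bsub_atom.
Qed.

Lemma ht_le_below x y z : y ≼ x -> z ≼ x -> ht y <= ht z -> y ≼ z.
Proof.
move=> yx zx yz; case: (ble_total_below yx zx) => // zy.
case: (z =P y) => [-> | zNy]; first exact: bsubxx.
by have := ht_lt zy zNy; lia.
Qed.

Lemma ht_inj_below x y z : y ≼ x -> z ≼ x -> ht y = ht z -> y = z.
Proof.
move=> yx zx yz; apply: bck_ax4.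
- by apply: (ht_le_below yx zx); rewrite yz.
- by apply: (ht_le_below zx yx); rewrite yz.
Qed.

Lemma ht_bsub x y : y ≼ x -> ht (x ⊖ y) = ht x - ht y.
Proof.
elim/ht_ind: x y => [|x x0 IH] y yx; first by rewrite (blex0 yx) bsubxx ht0.
case: (y =P x) => [-> | yNx]; first by rewrite bsubxx ht0 subnn.
have yxc := ble_bsub_atom yx yNx; have := IH y yxc.
have xy0 : x ⊖ y <> O by move/(bck_ax4 yx).
rewrite bsubAC !ht_bsub_atom; have := ht_gt0 x0; have := ht_gt0 xy0.
by have := ht_mono yxc; rewrite ht_bsub_atom; lia.
Qed.

Lemma ht_bsub_comparable x y : x ≼ y \/ y ≼ x -> ht (x ⊖ y) = ht x - ht y.
Proof.
case=> [xy | /ht_bsub //]; rewrite xy ht0.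
by apply/esym/eqP; rewrite subn_eq0 ht_mono.
Qed.

Definition lower x k := iter (ht x - k) (fun u => u ⊖ c) x.

Lemma lower_le x k : lower x k ≼ x.
Proof.
rewrite /lower; elim: (_ - _) => [|n IH] /=; first exact: bsubxx.
exact: ble_trans (ble_subr _ _) IH.
Qed.

Lemma ht_lower x k : k <= ht x -> ht (lower x k) = k.
Proof.
have ht_iter n : ht (iter n (fun u => u ⊖ c) x) = ht x - n.
  by elim: n => [|n IH] /=; rewrite ?subn0 // ht_bsub_atom IH subnS.
by move=> kx; rewrite ht_iter subKn.
Qed.

Lemma lower_ht x z : z ≼ x -> lower x (ht z) = z.
Proof.
move=> zx; have zx_ht := ht_mono zx.
by apply: ht_inj_below (lower_le x _) zx _; rewrite ht_lower.
Qed.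

Lemma lower_bsub x k l : k <= ht x -> l <= ht x ->
  lower x k ⊖ lower x l = lower x (k - l).
Proof.
move=> kx lx; apply: (@ht_inj_below x).
- exact: ble_trans (ble_subr _ _) (lower_le x k).
- exact: lower_le.
have kl_total := ble_total_below (lower_le x k) (lower_le x l).
by rewrite ht_bsub_comparable // !ht_lower // (leq_trans (leq_subr l k)).
Qed.

Section MinimalElement.
Variable B : {set T}.
Hypotheses (B0 : O \in B) (B_bsub : forall x y, x \in B -> y \in B -> x ⊖ y \in B).
Variable b0 : T.
Hypotheses (b0B : b0 \in B) (b0_neq0 : b0 <> O).
Hypothesis b0_min : forall b, b \in B -> b <> O -> ht b0 <= ht b.
Local Notation d := (ht b0).

Lemma bmeet_subalg x y : x \in B -> y \in B -> meet x y \in B.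
Proof. by move=> xB yB; apply: B_bsub; last apply: B_bsub. Qed.

Lemma subalg_step b : b \in B -> b <> O ->
  exists b', [/\ b' \in B, b' ≼ b & ht b' = ht b - d].
Proof.
move=> bB b_neq0; have mB := bmeet_subalg bB b0B.
have hm : ht (meet b b0) = d.
  apply/eqP; rewrite eqn_leq ht_mono ?bmeet_ler //=.
  by apply: b0_min mB _; apply: bmeet_neq0.
exists (b ⊖ meet b b0); split; [exact: B_bsub | exact: ble_subr |].
by rewrite ht_bsub ?ble_subr // hm.
Qed.

Lemma dvdn_ht_subalg b : b \in B -> d %| ht b.
Proof.
have [n] := ubnP (ht b); elim: n b => // n IH b hb bB.
case: (b =P O) => [-> | b_neq0]; first by rewrite ht0 dvdn0.
have [b' [b'B _ hb']] := subalg_step bB b_neq0.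
have d_le := b0_min bB b_neq0.
rewrite -(subnK d_le) dvdn_addl // -hb'; apply: IH b'B.
by rewrite hb'; have := ht_gt0 b0_neq0; lia.
Qed.

Lemma subalg_closed_below b z : b \in B -> z ≼ b -> d %| ht z -> z \in B.
Proof.
have [n] := ubnP (ht b); elim: n b => // n IH b hb bB zb dz.
case: (z =P b) => [-> // | zNb].
have b_neq0 : b <> O by move=> b_eq0; apply: zNb; rewrite b_eq0 in zb *; apply: blex0.
have [b' [b'B b'b hb']] := subalg_step bB b_neq0.
have hz : ht z <= ht b'.
  by rewrite hb'; apply: leq_sub_dvdn dz (dvdn_ht_subalg bB) (ht_lt zb zNb).
apply: IH b'B (ht_le_below zb b'b hz) dz.
by rewrite hb'; have := ht_gt0 b0_neq0; have := ht_gt0 b_neq0; lia.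
Qed.

Lemma subalg_downset : d = 1 -> is_downset A B.
Proof.
by move=> d1 x y yB /eqP xy; apply: subalg_closed_below yB xy _; rewrite d1 dvd1n.
Qed.

Lemma subalg_chain_top : is_chain A B ->
  exists2 t, t \in B & forall b, b \in B -> b ≼ t.
Proof.
move=> Bchain; case: (@arg_maxnP _ b0 (mem B) ht b0B) => t tB t_max.
exists t => // b bB; case: (Bchain b t bB tB) => /eqP // tb.
case: (t =P b) => [-> | tNb]; first exact: bsubxx.
by have := ht_lt tb tNb; have := t_max b bB; lia.
Qed.

(* The heights in the chain [B] are [0, d, ..., m d]; dividing them by [d]
   matches [B] with the principal downset of height [m]. *)
Lemma chain_subalg_iso : is_chain A B -> exists D, in_Sd A D /\ subalg_iso A B D.
Proof.
move=> Bchain; have [t tB t_top] := subalg_chain_top Bchain.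
have d_gt0 := ht_gt0 b0_neq0.
pose s := lower t (ht t %/ d).
have hs : ht s = ht t %/ d by rewrite ht_lower // leq_div.
pose f b := lower s (ht b %/ d).
have ht_div_le b : b \in B -> ht b %/ d <= ht s.
  by move=> bB; rewrite hs leq_div2r // ht_mono // t_top.
have ht_f b : b \in B -> ht (f b) = ht b %/ d by move=> bB; rewrite ht_lower // ht_div_le.
exists (down s); split; first exact: down_in_Sd.
exists f; split; [|split].
- move=> x y xB yB fxy; apply: (ht_inj_below (t_top x xB) (t_top y yB)).
  by rewrite -(divnK (dvdn_ht_subalg xB)) -(divnK (dvdn_ht_subalg yB)) -!ht_f ?fxy.
- apply/setP => z; rewrite in_down; apply/imsetP/eqP => [[b bB ->] | zs].
    exact: lower_le.
  have hz : ht z * d <= ht t by rewrite -leq_divRL // -hs ht_mono.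
  have bB : lower t (ht z * d) \in B.
    by apply: subalg_closed_below tB (lower_le t _) _; rewrite ht_lower // dvdn_mull.
  by exists (lower t (ht z * d)) => //; rewrite /f ht_lower // mulnK // lower_ht.
- move=> x y xB yB; rewrite /f lower_bsub ?ht_div_le //; congr lower.
  rewrite ht_bsub_comparable; last by case: (Bchain x y xB yB) => /eqP; [left | right].
  exact: divnBr (dvdn_ht_subalg yB).
Qed.

Lemma subalg_eq_Ck : B = Ck A (downclosure B) d :|: maxel A (downclosure B).
Proof.
have [_ Cdown] := downclosure_in_Sd B0.
apply/setP => z; rewrite in_setU; apply/idP/orP => [zB | [] ].
- left; have zC := mem_downclosure zB (bsubxx z).
  by rewrite inE zC hgt_downset // dvdn_ht_subalg.
- rewrite inE => /andP [/bigcupP [b bB]]; rewrite in_down => /eqP zb.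
  rewrite hgt_downset ?(mem_downclosure bB zb) //.
  exact: subalg_closed_below bB zb.
- exact/subsetP/maxel_downclosure.
Qed.

Lemma subalg_chain_of_ht_le : (forall b, b \in B -> ht b <= d) -> is_chain A B.
Proof.
move=> ht_le x y xB yB.
case: (x =P O) => [-> | x_neq0]; first by left; rewrite /ble bck_ax3.
case: (y =P O) => [-> | y_neq0]; first by right; rewrite /ble bck_ax3.
left; apply/eqP; have mB := bmeet_subalg xB yB.
have hm : ht (meet x y) = ht x.
  apply/eqP; rewrite eqn_leq ht_mono ?ble_subr //=.
  exact: leq_trans (ht_le x xB) (b0_min mB (bmeet_neq0 x_neq0 y_neq0)).
by rewrite -(ht_inj_below (ble_subr x _) (bsubxx x) hm); apply: bmeet_ler.
Qed.

Lemma subalg_Sdelta_or_chain : d != 1 -> in_Sdelta_Sd A B \/ is_chain A B.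
Proof.
move=> d_neq1; have [Csub Cdown] := downclosure_in_Sd B0.
have [t tB height_t] := height_downclosure B0.
case: (d =P height A (downclosure B)) => [d_height | d_Nheight].
  right; apply: subalg_chain_of_ht_le => b bB; rewrite d_height.
  exact: ht_le_height (mem_downclosure bB (bsubxx b)).
left; exists (downclosure B); split=> //; split; first by split.
exists d; split; first by rewrite height_t dvdn_ht_subalg.
by split; [apply/eqP | split=> //; apply: subalg_eq_Ck].
Qed.

End MinimalElement.

Lemma subalg_Sd_or_min B : is_subalg A B -> in_Sd A B \/
  exists b0, [/\ b0 \in B, b0 <> O & forall b, b \in B -> b <> O -> ht b0 <= ht b].
Proof.
move=> Bsub; case: (boolP [exists b in B, b != O]) => [|/exists_inP noB].
  case/exists_inP=> b bB b_neq0; right. pose P := [pred z | (z \in B) && (z != O)].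
  have Pb : P b by rewrite /= bB.
  case: (arg_minnP ht Pb) => b0 /andP [b0B /eqP b0_neq0] b0_min.
  by exists b0; split=> // b' b'B /eqP b'_neq0; apply: b0_min; rewrite /= b'B.
left; split=> // x y yB /eqP xy.
case: (y =P O) => [y0 | /eqP y_neq0]; last by case: noB; exists y.
by rewrite y0 in xy; rewrite (blex0 xy); apply: Bsub.1.
Qed.

Lemma subalg_classification B : is_subalg A B ->
  [\/ in_Sd A B, in_Sdelta_Sd A B | is_chain A B].
Proof.
move=> Bsub; case: (subalg_Sd_or_min Bsub) => [| [b0 [b0B b0_neq0 b0_min]]].
  by constructor 1.
have [B0 B_bsub] := Bsub.
case: (ht b0 =P 1) => [d1 | /eqP d_neq1].
  by constructor 1; split=> //; apply: subalg_downset d1.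
have := subalg_Sdelta_or_chain B0 B_bsub b0B b0_neq0 b0_min d_neq1.
by case; [constructor 2 | constructor 3].
Qed.

Lemma chain_subalg_iso_Sd B : is_subalg A B -> is_chain A B ->
  exists D, in_Sd A D /\ subalg_iso A B D.
Proof.
move=> Bsub Bchain; case: (subalg_Sd_or_min Bsub) => [BSd | [b0 [b0B b0_neq0 b0_min]]].
  by exists B; split=> //; apply: subalg_iso_refl.
have [B0 B_bsub] := Bsub.
exact: (chain_subalg_iso B0 B_bsub b0B b0_neq0 b0_min Bchain).
Qed.

End Atom.

End CBCKTheory.

Theorem mainTheorem4 (T : finType) (A : cBCK T) :
  subdirectly_irreducible A ->
  ((forall B : {set T}, is_subalg A B ->
      exists D : {set T}, (in_Sd A D \/ in_Sdelta_Sd A D) /\ subalg_iso A B D) /\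
   (forall D : {set T}, in_Sd A D \/ in_Sdelta_Sd A D -> is_subalg A D)) /\
  ((forall D : {set T}, in_Sdelta_Sd A D -> is_chain A D) ->
   forall B : {set T}, is_subalg A B ->
     exists D : {set T}, in_Sd A D /\ subalg_iso A B D).
Proof.
move=> SI; have [c [c_neq0 c_atom]] := si_exists_atom SI.
have classify := subalg_classification c_neq0 c_atom.
have chain_iso := chain_subalg_iso_Sd c_neq0 c_atom.
split; first split.
- move=> B Bsub; case: (classify B Bsub) => [BSd | BSdelta | Bchain].
  + by exists B; split; [left | apply: subalg_iso_refl].
  + by exists B; split; [right | apply: subalg_iso_refl].
  + by have [D [DSd BD]] := chain_iso B Bsub Bchain; exists D; split; [left |].
- by move=> D [[Dsub _] | [C [_ [Dsub _]]]].
- move=> Sdelta_chain B Bsub; case: (classify B Bsub) => [BSd | BSdelta | Bchain].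
  + by exists B; split=> //; apply: subalg_iso_refl.
  + exact: chain_iso Bsub (Sdelta_chain B BSdelta).
  + exact: chain_iso Bsub Bchain.
Qed.
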